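(* For every closed $\varphi\in\mathrm{sHML}_F$, the monitor $\mathrm{m}(\varphi)$ is sound and violation-complete for $\varphi$ over finfinite traces. For every closed $\varphi\in\mathrm{cHML}_F$, $\mathrm{m}(\varphi)$ is sound and satisfaction-complete for $\varphi$ over finfinite traces.
   Context: Fix a finite set $\mathrm{Act}$ of actions, $\tau\notin\mathrm{Act}$. recHML formulae: $\varphi::=\mathrm{tt}\mid\mathrm{ff}\mid\varphi\vee\varphi\mid\varphi\wedge\varphi\mid\langle A\rangle\varphi\mid[A]\varphi\mid\min X.\varphi\mid\max X.\varphi\mid X$ ($A\subseteq\mathrm{Act}$), guarded. Fragments: $\mathrm{sHML}_F$: $\varphi::=\mathrm{tt}\mid\mathrm{ff}\mid[A]\varphi\mid\varphi\vee\varphi\mid\varphi\wedge\varphi\mid\max X.\varphi\mid X$; $\mathrm{cHML}_F$: $\varphi::=\mathrm{tt}\mid\mathrm{ff}\mid\langle A\rangle\varphi\mid\varphi\vee\varphi\mid\varphi\wedge\varphi\mid\min X.\varphi\mid X$. Finfinite traces $\mathrm{Fin}=\mathrm{Act}^\omega\cup\mathrm{Act}^*$; finfinite semantics: $[\![\mathrm{tt}]\!]_F=\mathrm{Fin}$, $[\![\mathrm{ff}]\!]_F=\emptyset$, $\vee,\wedge$ union/intersection, $[\![\langle A\rangle\varphi,\sigma]\!]_F=\{ag\mid a\in A,g\in[\![\varphi,\sigma]\!]_F\}$, $[\![[A]\varphi,\sigma]\!]_F=\{g\mid\forall a\in A,\forall g'.\ g=ag'\Rightarrow g'\in[\![\varphi,\sigma]\!]_F\}$,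 $\min/\max$ as least/greatest fixpoints (intersection of pre-fixpoints / union of post-fixpoints), $[\![X,\sigma]\!]_F=\sigma(X)$. Monitors: $m,n::=v\mid a.m\mid m+n\mid\mathrm{rec}\,x.m\mid x\mid m\otimes n\mid m\oplus n$, verdicts $v::=\mathrm{end}\mid\mathrm{no}\mid\mathrm{yes}$, with transitions ($\mu\in\mathrm{Act}\cup\{\tau\}$, $a\in\mathrm{Act}$, $\odot\in\{\otimes,\oplus\}$): $a.m\xrightarrow{a}m$; $\mathrm{rec}\,x.m\xrightarrow{\tau}m[\mathrm{rec}\,x.m/x]$; if $m\xrightarrow{\mu}m'$ then $m+n\xrightarrow{\mu}m'$ and $n+m\xrightarrow{\mu}m'$; $v\xrightarrow{a}v$; if $m\xrightarrow{a}m'$ and $n\xrightarrow{a}n'$ then $m\odot n\xrightarrow{a}m'\odot n'$; if $m\xrightarrow{\tau}m'$ then $m\odot n\xrightarrow{\tau}m'\odot n$ and $n\odot m\xrightarrow{\tau}n\odot m'$; $\mathrm{end}\odot\mathrm{end}\xrightarrow{\tau}\mathrm{end}$; $\mathrm{yes}\otimes m\xrightarrow{\tau}m$, $\mathrm{no}\otimes m\xrightarrow{\tau}\mathrm{no}$, $\mathrm{no}\oplus m\xrightarrow{\tau}m$, $\mathrm{yes}\oplus m\xrightarrow{\tau}\mathrm{yes}$ and their symmetric versions. Weak transitions $\Rightarrow,\overset{a}{\Longrightarrow},\overset{s}{\Longrightarrow}$ as usual. $m$ rejects (accepts) $s\in\mathrm{Act}^*$ if $m\overset{s}{\Longrightarrow}\mathrm{no}$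 ($\mathrm{yes}$), and rejects (accepts) $g\in\mathrm{Fin}$ if it rejects (accepts) some finite prefix of $g$. Soundness over finfinite traces: $m$ rejects $g$ implies $g\notin[\![\varphi]\!]_F$, and $m$ accepts $g$ implies $g\in[\![\varphi]\!]_F$, for all $g\in\mathrm{Fin}$; violation-complete: $g\notin[\![\varphi]\!]_F$ implies $m$ rejects $g$; satisfaction-complete: $g\in[\![\varphi]\!]_F$ implies $m$ accepts $g$. Monitor synthesis (writing $A.n$ for $\sum_{a\in A}a.n$, $\overline{A}=\mathrm{Act}\setminus A$, and omitting a summand whose action set is empty): $\mathrm{m}(\mathrm{tt})=\mathrm{yes}$, $\mathrm{m}(\mathrm{ff})=\mathrm{no}$, $\mathrm{m}(X)=x$, $\mathrm{m}(\varphi\wedge\psi)=\mathrm{m}(\varphi)\otimes\mathrm{m}(\psi)$, $\mathrm{m}(\varphi\vee\psi)=\mathrm{m}(\varphi)\oplus\mathrm{m}(\psi)$, $\mathrm{m}([A]\varphi)=A.\mathrm{m}(\varphi)+\overline{A}.\mathrm{yes}$, $\mathrm{m}(\langle A\rangle\varphi)=A.\mathrm{m}(\varphi)+\overline{A}.\mathrm{no}$, $\mathrm{m}(\max X.\varphi)=\mathrm{m}(\min X.\varphi)=\mathrm{rec}\,x.\mathrm{m}(\varphi)$. *)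

From mathcomp Require Import all_boot.
From Stdlib Require Import Relations.
Set Implicit Arguments. Unset Strict Implicit. Unset Printing Implicit Defensive.

Section Defs.
Variable Act : finType.

Inductive trace : Type :=
| TFin of seq Act
| TInf of (nat -> Act).

Definition tcons (a : Act) (g : trace) : trace :=
  match g with
  | TFin s => TFin (a :: s)
  | TInf f => TInf (fun n => if n is k.+1 then f k else a)
  end.

Definition is_prefix (s : seq Act) (g : trace) : Prop :=
  match g with
  | TFin t => s = take (size s) t
  | TInf f => s = mkseq f (size s)
  end.

Inductive form : Type :=
| FTt | FFf
| FOr of form & form
| FAnd of form & form
| FDia of {set Act} & form
| FBox of {set Act} & form
| FMin of nat & form
| FMax of nat & form
| FVar of nat.

Definition upd (s : nat -> trace -> Prop) (X : nat) (S : trace -> Prop) :=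
  fun Y => if Y == X then S else s Y.

Fixpoint sem (phi : form) (sigma : nat -> trace -> Prop) : trace -> Prop :=
  match phi with
  | FTt => fun _ => True
  | FFf => fun _ => False
  | FOr p q => fun g => sem p sigma g \/ sem q sigma g
  | FAnd p q => fun g => sem p sigma g /\ sem q sigma g
  | FDia A p => fun g => exists a g', a \in A /\ g = tcons a g' /\ sem p sigma g'
  | FBox A p => fun g => forall a g', a \in A -> g = tcons a g' -> sem p sigma g'
  | FMin X p => fun g =>
      forall S : trace -> Prop,
        (forall h, sem p (upd sigma X S) h -> S h) -> S g
  | FMax X p => fun g =>
      exists S : trace -> Prop,
        (forall h, S h -> sem p (upd sigma X S) h) /\ S g
  | FVar X => sigma X
  end.

Definition env0 : nat -> trace -> Prop := fun _ _ => False.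

Definition semF (phi : form) : trace -> Prop := sem phi env0.

Fixpoint closed_in (bound : seq nat) (phi : form) : bool :=
  match phi with
  | FTt | FFf => true
  | FOr p q | FAnd p q => closed_in bound p && closed_in bound q
  | FDia _ p | FBox _ p => closed_in bound p
  | FMin X p | FMax X p => closed_in (X :: bound) p
  | FVar X => X \in bound
  end.
Definition closedF (phi : form) := closed_in [::] phi.

(* guardedness: every occurrence of a bound variable lies under a modality
   within the scope of its binder; [unsafe] = variables bound but not yet
   guarded at the current position *)
Fixpoint guarded_in (unsafe : seq nat) (phi : form) : bool :=
  match phi with
  | FTt | FFf => true
  | FOr p q | FAnd p q => guarded_in unsafe p && guarded_in unsafe q
  | FDia _ p | FBox _ p => guarded_in [::] p
  | FMin X p | FMax X p => guarded_in (X :: unsafe) p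
  | FVar X => X \notin unsafe
  end.
Definition guardedF (phi : form) := guarded_in [::] phi.

Fixpoint sHML (phi : form) : bool :=
  match phi with
  | FTt | FFf | FVar _ => true
  | FOr p q | FAnd p q => sHML p && sHML q
  | FBox _ p | FMax _ p => sHML p
  | FDia _ _ | FMin _ _ => false
  end.
Fixpoint cHML (phi : form) : bool :=
  match phi with
  | FTt | FFf | FVar _ => true
  | FOr p q | FAnd p q => cHML p && cHML q
  | FDia _ p | FMin _ p => cHML p
  | FBox _ _ | FMax _ _ => false
  end.

Inductive verdict : Type := VEnd | VNo | VYes.

Inductive mon : Type :=
| MV of verdict
| MAct of Act & mon
| MSum of mon & mon
| MRec of nat & mon
| MVar of nat
| MAnd of mon & mon
| MOr of mon & mon.

Fixpoint subst (m : mon) (x : nat) (N : mon) : mon :=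
  match m with
  | MV v => MV v
  | MAct a m' => MAct a (subst m' x N)
  | MSum m1 m2 => MSum (subst m1 x N) (subst m2 x N)
  | MRec y m' => if y == x then MRec y m' else MRec y (subst m' x N)
  | MVar y => if y == x then N else MVar y
  | MAnd m1 m2 => MAnd (subst m1 x N) (subst m2 x N)
  | MOr m1 m2 => MOr (subst m1 x N) (subst m2 x N)
  end.

(* labelled transitions; label None = tau, Some a = a *)
Inductive step : mon -> option Act -> mon -> Prop :=
| st_act a m : step (MAct a m) (Some a) m
| st_rec x m : step (MRec x m) None (subst m x (MRec x m))
| st_suml m n mu m' : step m mu m' -> step (MSum m n) mu m'
| st_sumr m n mu m' : step m mu m' -> step (MSum n m) mu m'
| st_verd v a : step (MV v) (Some a) (MV v)
| st_and_act m n a m' n' :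
    step m (Some a) m' -> step n (Some a) n' -> step (MAnd m n) (Some a) (MAnd m' n')
| st_or_act m n a m' n' :
    step m (Some a) m' -> step n (Some a) n' -> step (MOr m n) (Some a) (MOr m' n')
| st_and_taul m n m' : step m None m' -> step (MAnd m n) None (MAnd m' n)
| st_and_taur m n m' : step m None m' -> step (MAnd n m) None (MAnd n m')
| st_or_taul m n m' : step m None m' -> step (MOr m n) None (MOr m' n)
| st_or_taur m n m' : step m None m' -> step (MOr n m) None (MOr n m')
| st_and_end : step (MAnd (MV VEnd) (MV VEnd)) None (MV VEnd)
| st_or_end : step (MOr (MV VEnd) (MV VEnd)) None (MV VEnd)
| st_and_yesl m : step (MAnd (MV VYes) m) None m
| st_and_yesr m : step (MAnd m (MV VYes)) None m
| st_and_nol m : step (MAnd (MV VNo) m) None (MV VNo)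
| st_and_nor m : step (MAnd m (MV VNo)) None (MV VNo)
| st_or_nol m : step (MOr (MV VNo) m) None m
| st_or_nor m : step (MOr m (MV VNo)) None m
| st_or_yesl m : step (MOr (MV VYes) m) None (MV VYes)
| st_or_yesr m : step (MOr m (MV VYes)) None (MV VYes).

Definition taus : relation mon := clos_refl_trans mon (fun m m' => step m None m').

Definition wstep (m : mon) (a : Act) (m' : mon) : Prop :=
  exists m1 m2, taus m m1 /\ step m1 (Some a) m2 /\ taus m2 m'.

Fixpoint wtrace (m : mon) (s : seq Act) (m' : mon) : Prop :=
  match s with
  | [::] => taus m m'
  | a :: s' => exists m1, wstep m a m1 /\ wtrace m1 s' m'
  end.

Definition rejects_fin (m : mon) (s : seq Act) := wtrace m s (MV VNo).
Definition accepts_fin (m : mon) (s : seq Act) := wtrace m s (MV VYes).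
Definition rejects (m : mon) (g : trace) :=
  exists s, is_prefix s g /\ rejects_fin m s.
Definition accepts (m : mon) (g : trace) :=
  exists s, is_prefix s g /\ accepts_fin m s.

Definition sound (m : mon) (phi : form) : Prop :=
  forall g, (rejects m g -> ~ semF phi g) /\ (accepts m g -> semF phi g).
Definition violation_complete (m : mon) (phi : form) : Prop :=
  forall g, ~ semF phi g -> rejects m g.
Definition satisfaction_complete (m : mon) (phi : form) : Prop :=
  forall g, semF phi g -> accepts m g.

(* A.n = sum_{a in A} a.n ; None when A is empty (summand omitted) *)
Definition prefix_sum (A : {set Act}) (n : mon) : option mon :=
  match enum A with
  | [::] => None
  | a :: s => Some (foldl (fun acc b => MSum acc (MAct b n)) (MAct a n) s)
  end.

(* A.n + B.n', omitting empty summands; if both are empty (only possible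
   when Act is empty) we return the inert verdict end *)
Definition osum (o1 o2 : option mon) : mon :=
  match o1, o2 with
  | Some m1, Some m2 => MSum m1 m2
  | Some m1, None => m1
  | None, Some m2 => m2
  | None, None => MV VEnd
  end.

Fixpoint synth (phi : form) : mon :=
  match phi with
  | FTt => MV VYes
  | FFf => MV VNo
  | FVar X => MVar X
  | FAnd p q => MAnd (synth p) (synth q)
  | FOr p q => MOr (synth p) (synth q)
  | FBox A p => osum (prefix_sum A (synth p)) (prefix_sum (~: A) (MV VYes))
  | FDia A p => osum (prefix_sum A (synth p)) (prefix_sum (~: A) (MV VNo))
  | FMax X p => MRec X (synth p)
  | FMin X p => MRec X (synth p)
  end.

End Defs.

(* Soundness: a monitor state stands for a trace property, and this correspondence is
   closed under transitions, an action [a] taking [P] to its derivative [fun g => P (a g)];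
   the verdict [yes] can only stand for a property holding everywhere, [no] for one holding
   nowhere.  A closed [m(phi)] stands for [[phi]], the unfolding of [rec x] being matched by
   the fixpoint equation of [min]/[max]; so a verdict reached along a prefix is correct for
   every extension of it.
   Completeness: guardedness makes synthesised monitors total (able to follow every finite
   trace), so in a conjunction or disjunction one component's verdict propagates while the
   other keeps running.  For sHML the traces not rejected by [rec x.m(phi)] form a
   post-fixpoint of [max X.phi]; for cHML the accepted traces form a pre-fixpoint of
   [min X.phi]. *)
From mathcomp Require Import all_boot.
From Stdlib Require Import Relations Classical FunctionalExtensionality.
Set Implicit Arguments. Unset Strict Implicit. Unset Printing Implicit Defensive.

Arguments MV {Act} _.
Arguments MVar {Act} _.

Section MonitorSynthesis.
Variable Act : finType.
Implicit Types (m n : mon Act) (p phi : form Act) (A : {set Act}) (v : verdict).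

Definition mupd (r : nat -> mon Act) (x : nat) (N : mon Act) : nat -> mon Act :=
  fun y => if y == x then N else r y.

(* Simultaneous substitution; a binder shadows its variable by mapping it to itself. *)
Fixpoint msubst m (r : nat -> mon Act) : mon Act :=
  match m with
  | MV v => MV v
  | MAct a m' => MAct a (msubst m' r)
  | MSum m1 m2 => MSum (msubst m1 r) (msubst m2 r)
  | MRec y m' => MRec y (msubst m' (mupd r y (MVar y)))
  | MVar y => r y
  | MAnd m1 m2 => MAnd (msubst m1 r) (msubst m2 r)
  | MOr m1 m2 => MOr (msubst m1 r) (msubst m2 r)
  end.

Fixpoint mclosed_in (bound : seq nat) m : bool :=
  match m with
  | MV _ => true
  | MAct _ m' => mclosed_in bound m'
  | MSum m1 m2 | MAnd m1 m2 | MOr m1 m2 => mclosed_in bound m1 && mclosed_in bound m2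
  | MRec y m' => mclosed_in (y :: bound) m'
  | MVar y => y \in bound
  end.

Definition closed_env (r : nat -> mon Act) := forall y, mclosed_in [::] (r y).

Lemma closed_env_mupd r x N : closed_env r -> mclosed_in [::] N -> closed_env (mupd r x N).
Proof. by move=> clr clN y; rewrite /mupd; case: eqP. Qed.

Lemma mclosed_in_sub B B' m : {subset B <= B'} -> mclosed_in B m -> mclosed_in B' m.
Proof.
elim: m B B' => [v|a m IH|m1 IH1 m2 IH2|y m IH|y|m1 IH1 m2 IH2|m1 IH1 m2 IH2] B B' sBB' //=.
- exact: IH.
- by case/andP=> /(IH1 _ _ sBB') -> /(IH2 _ _ sBB').
- by apply: IH => z; rewrite !inE => /orP[->|/sBB' ->]; rewrite ?orbT.
- exact: sBB'.
- by case/andP=> /(IH1 _ _ sBB') -> /(IH2 _ _ sBB').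
- by case/andP=> /(IH1 _ _ sBB') -> /(IH2 _ _ sBB').
Qed.

Lemma subst_mclosed B m x N : mclosed_in B m -> x \notin B -> subst m x N = m.
Proof.
elim: m B => [v|a m IH|m1 IH1 m2 IH2|y m IH|y|m1 IH1 m2 IH2|m1 IH1 m2 IH2] B //=.
- by move=> cl xB; rewrite (IH B).
- by case/andP=> cl1 cl2 xB; rewrite (IH1 B) ?(IH2 B).
- case: eqP => // /eqP yx cl xB; rewrite (IH (y :: B)) // inE negb_or xB andbT.
  by rewrite eq_sym.
- by case: eqP => // -> ->.
- by case/andP=> cl1 cl2 xB; rewrite (IH1 B) ?(IH2 B).
- by case/andP=> cl1 cl2 xB; rewrite (IH1 B) ?(IH2 B).
Qed.

Lemma mclosed_msubst B m r : (forall y, mclosed_in B (r y)) -> mclosed_in B (msubst m r).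
Proof.
elim: m B r => [v|a m IH|m1 IH1 m2 IH2|y m IH|y|m1 IH1 m2 IH2|m1 IH1 m2 IH2] B r clr //=.
- exact: IH.
- by rewrite IH1 ?IH2.
- apply: IH => z; rewrite /mupd; case: eqP => _ /=; first by rewrite inE eqxx.
  by apply: mclosed_in_sub (clr z) => w; rewrite inE => ->; rewrite orbT.
- by rewrite IH1 ?IH2.
- by rewrite IH1 ?IH2.
Qed.

Lemma eq_msubst m r r' : r =1 r' -> msubst m r = msubst m r'.
Proof.
elim: m r r' => [v|a m IH|m1 IH1 m2 IH2|y m IH|y|m1 IH1 m2 IH2|m1 IH1 m2 IH2] r r' rr' //=.
- by rewrite (IH r r').
- by rewrite (IH1 r r') ?(IH2 r r').
- by rewrite (IH _ (mupd r' y (MVar y))) // => z; rewrite /mupd; case: eqP.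
- by rewrite (IH1 r r') ?(IH2 r r').
- by rewrite (IH1 r r') ?(IH2 r r').
Qed.

Lemma mupdC r x y M N : x != y -> mupd (mupd r x M) y N =1 mupd (mupd r y N) x M.
Proof. by move=> xy z; rewrite /mupd; case: (z =P y) => [->|//]; rewrite eq_sym (negbTE xy). Qed.

Lemma mupd_id r x M N : mupd (mupd r x M) x N =1 mupd r x N.
Proof. by move=> z; rewrite /mupd; case: eqP. Qed.

Lemma subst_msubst m r x N :
  (forall y, y != x -> subst (r y) x N = r y) ->
  subst (msubst m (mupd r x (MVar x))) x N = msubst m (mupd r x N).
Proof.
elim: m r => [v|a m IH|m1 IH1 m2 IH2|y m IH|y|m1 IH1 m2 IH2|m1 IH1 m2 IH2] r rN //=.
- by rewrite IH.
- by rewrite IH1 ?IH2.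
- case: eqP => [->|/eqP yx].
    by congr MRec; apply: eq_msubst => z; rewrite !mupd_id.
  have xy : x != y by rewrite eq_sym.
  rewrite (eq_msubst m (mupdC r (MVar x) (MVar y) xy)) IH; last first.
    move=> z zx; rewrite /mupd; case: eqP => [_|_]; last exact: rN.
    by rewrite /= (negbTE yx).
  by congr MRec; apply: eq_msubst; apply: mupdC.
- rewrite /mupd; case: eqP => [_|/eqP yx] /=; first by rewrite eqxx.
  exact: rN.
- by rewrite IH1 ?IH2.
- by rewrite IH1 ?IH2.
Qed.

Lemma step_rec_msubst x m r : closed_env r ->
  step (msubst (MRec x m) r) None (msubst m (mupd r x (msubst (MRec x m) r))).
Proof.
move=> clr; rewrite -subst_msubst; first exact: st_rec.
by move=> y _; exact: subst_mclosed (clr y) _.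
Qed.

Lemma step_act_inv a n mu m' : step (MAct a n) mu m' -> mu = Some a /\ m' = n.
Proof. by move=> st; inversion st. Qed.

Lemma step_sum_inv m1 m2 mu m' : step (MSum m1 m2) mu m' -> step m1 mu m' \/ step m2 mu m'.
Proof. by move=> st; inversion st; [left|right]. Qed.

Lemma step_foldl_sum n acc s mu m' :
  step (foldl (fun acc b => MSum acc (MAct b n)) acc s) mu m' <->
  step acc mu m' \/ exists2 b, b \in s & mu = Some b /\ m' = n.
Proof.
elim: s acc => [|b s IH] acc /=; first by split; [left|case=> [|[]]].
rewrite IH; split.
- case=> [/step_sum_inv [|/step_act_inv]|[c cs]]; first by left.
    by right; exists b; rewrite ?mem_head.
  by right; exists c; rewrite // inE cs orbT.
- case=> [st|[c]]; first by left; apply: st_suml.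
  rewrite inE => /orP [/eqP -> [-> ->]|cs E]; last by right; exists c.
  by left; apply/st_sumr/st_act.
Qed.

Lemma prefix_sum_stepE A n m mu m' : prefix_sum A n = Some m ->
  step m mu m' <-> exists2 a, a \in A & mu = Some a /\ m' = n.
Proof.
rewrite /prefix_sum; have := mem_enum A.
case: (enum A) => [//|a0 s] memA [<-]; rewrite step_foldl_sum; split.
- case=> [/step_act_inv [-> ->]|[b bs E]]; first by exists a0; rewrite -?memA ?mem_head.
  by exists b; rewrite // -memA inE bs orbT.
- case=> a; rewrite -memA inE => /orP [/eqP -> [-> ->]|aA E]; first by left; apply: st_act.
  by right; exists a.
Qed.

Lemma prefix_sum_None A n : prefix_sum A n = None -> A = set0.
Proof.
by rewrite /prefix_sum; case E: (enum A) => // _; apply/setP => a; rewrite inE -mem_enum E.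
Qed.

Definition guard_mon A n v : mon Act := osum (prefix_sum A n) (prefix_sum (~: A) (MV v)).

Lemma guard_mon_stepP A n v mu m' : step (guard_mon A n v) mu m' ->
  exists2 a, mu = Some a & m' = if a \in A then n else MV v.
Proof.
rewrite /guard_mon.
have fromA m : prefix_sum A n = Some m -> step m mu m' ->
    exists2 a, mu = Some a & m' = if a \in A then n else MV v.
  by move=> /prefix_sum_stepE -> [a aA [-> ->]]; exists a; rewrite ?aA.
have fromC m : prefix_sum (~: A) (MV v) = Some m -> step m mu m' ->
    exists2 a, mu = Some a & m' = if a \in A then n else MV v.
  by move=> /prefix_sum_stepE -> [a]; rewrite inE => /negbTE aA [-> ->]; exists a; rewrite ?aA.
case E1: (prefix_sum A n) => [m1|]; case E2: (prefix_sum (~: A) (MV v)) => [m2|] //=.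
- by case/step_sum_inv; [exact: fromA|exact: fromC].
- exact: fromA.
- exact: fromC.
move=> st; inversion st; subst.
have := prefix_sum_None E2; have -> := prefix_sum_None E1.
by move/setP/(_ a); rewrite !inE.
Qed.

Lemma guard_mon_step A n v a : step (guard_mon A n v) (Some a) (if a \in A then n else MV v).
Proof.
rewrite /guard_mon; case aA: (a \in A).
- case E: (prefix_sum A n) => [m|]; last by rewrite (prefix_sum_None E) inE in aA.
  have st : step m (Some a) n by rewrite (prefix_sum_stepE _ _ E); exists a.
  by case: (prefix_sum _ _) => [m2|] //=; apply: st_suml.
- have aC : a \in ~: A by rewrite inE aA.
  case E: (prefix_sum (~: A) (MV v)) => [m|]; last by rewrite (prefix_sum_None E) inE in aC.
  have st : step m (Some a) (MV v) by rewrite (prefix_sum_stepE _ _ E); exists a.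
  by case: (prefix_sum A n) => [m1|] //=; apply: st_sumr.
Qed.

Lemma guard_mon_verdict A n v w : guard_mon A n v = MV w -> w = VEnd.
Proof.
have notMV B N m : prefix_sum B N = Some m -> m <> MV w.
  rewrite /prefix_sum; case: (enum B) => [|b s] //= [<-].
  have : MAct b N <> MV w by [].
  by elim: s (MAct b N) => [|c s IH] acc //= _; apply: IH.
rewrite /guard_mon.
case E1: (prefix_sum A n) => [m1|]; case E2: (prefix_sum (~: A) (MV v)) => [m2|] //=.
- by move/(notMV _ _ _ E1).
- by move/(notMV _ _ _ E2).
by case.
Qed.

Lemma msubst_prefix_sum A n r :
  omap (msubst^~ r) (prefix_sum A n) = prefix_sum A (msubst n r).
Proof.
rewrite /prefix_sum; case: (enum A) => [|a s] //=; congr Some.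
rewrite -[MAct a (msubst n r)]/(msubst (MAct a n) r).
by elim: s (MAct a n) => [|b s IH] acc //=; rewrite IH.
Qed.

Lemma msubst_osum o1 o2 r :
  msubst (osum o1 o2) r = osum (omap (msubst^~ r) o1) (omap (msubst^~ r) o2).
Proof. by case: o1; case: o2. Qed.

Lemma msubst_guard_mon A n v r : msubst (guard_mon A n v) r = guard_mon A (msubst n r) v.
Proof. by rewrite /guard_mon msubst_osum !msubst_prefix_sum. Qed.

Lemma msubst_synth_closed B p r : closed_in B p -> (forall y, y \in B -> r y = MVar y) ->
  msubst (synth p) r = synth p.
Proof.
elim: p B r => [|| p IHp q IHq | p IHp q IHq | A p IHp | A p IHp | y p IHp | y p IHp | y]
  B r /= clp rB //.
- by case/andP: clp => /IHp -> // /IHq ->.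
- by case/andP: clp => /IHp -> // /IHq ->.
- by rewrite -[RHS]/(guard_mon _ _ _) msubst_guard_mon (IHp B).
- by rewrite -[RHS]/(guard_mon _ _ _) msubst_guard_mon (IHp B).
- by rewrite (IHp (y :: B)) // => z; rewrite inE /mupd; case: eqP => [->|_ /rB].
- by rewrite (IHp (y :: B)) // => z; rewrite inE /mupd; case: eqP => [->|_ /rB].
- exact: rB.
Qed.

Definition env_le (s s' : nat -> trace Act -> Prop) := forall X g, s X g -> s' X g.

Lemma env_le_upd s s' X (S S' : trace Act -> Prop) :
  env_le s s' -> (forall g, S g -> S' g) -> env_le (upd s X S) (upd s' X S').
Proof. by move=> ss' SS' Y g; rewrite /upd; case: eqP => _; [apply: SS'|apply: ss']. Qed.

Lemma sem_mono p s s' : env_le s s' -> forall g, sem p s g -> sem p s' g.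
Proof.
elim: p s s' => [|| p IHp q IHq | p IHp q IHq | A p IHp | A p IHp | Y p IHp | Y p IHp | Y]
  s s' /= ss' g //.
- by case=> [/(IHp _ _ ss')|/(IHq _ _ ss')]; [left|right].
- by case=> /(IHp _ _ ss') ? /(IHq _ _ ss').
- by case=> a [g' [aA [-> /(IHp _ _ ss') ?]]]; exists a, g'.
- by move=> box a g' aA E; apply: IHp ss' _ (box a g' aA E).
- move=> lfp S pre; apply: lfp => h /(IHp _ _ _) ph; apply/pre/ph.
  exact: env_le_upd.
- case=> S [post Sg]; exists S; split=> // h /post; apply: IHp.
  exact: env_le_upd.
- exact: ss'.
Qed.

Lemma sem_min_unfold Y p s g :
  sem p (upd s Y (sem (FMin Y p) s)) g <-> sem (FMin Y p) s g.
Proof.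
have pre h : sem p (upd s Y (sem (FMin Y p) s)) h -> sem (FMin Y p) s h.
  move=> ph S preS; apply/preS/(sem_mono _ ph).
  by apply: env_le_upd => // k; apply.
split=> [|lfp]; first exact: pre.
by apply: lfp => h; apply: sem_mono; apply: env_le_upd => // k; apply: pre.
Qed.

Lemma sem_max_unfold Y p s g :
  sem p (upd s Y (sem (FMax Y p) s)) g <-> sem (FMax Y p) s g.
Proof.
have post h : sem (FMax Y p) s h -> sem p (upd s Y (sem (FMax Y p) s)) h.
  case=> S [postS Sh]; apply: sem_mono (postS _ Sh).
  by apply: env_le_upd => // k Sk; exists S.
split=> [gfp|]; last exact: post.
exists (sem p (upd s Y (sem (FMax Y p) s))); split=> // h.
by apply: sem_mono; apply: env_le_upd => // k; apply: post.
Qed.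

Lemma tcons_inj a b (g g' : trace Act) : tcons a g = tcons b g' -> a = b /\ g = g'.
Proof.
case: g => [s|f]; case: g' => [s'|f'] //= [].
- by move=> -> ->.
- move=> E; split; first exact: (congr1 (fun F => F 0) E).
  by congr TInf; apply: functional_extensionality => k; apply: (congr1 (fun F => F k.+1) E).
Qed.

(* The rules cover every state reachable from a closed synthesised monitor ([denotes_synth]
   absorbs the unfoldings of recursion), so the relation is invariant under transitions;
   [end] never yields a verdict and may stand for anything. *)
Inductive denotes : mon Act -> (trace Act -> Prop) -> Prop :=
| denotes_yes : denotes (MV VYes) (fun _ => True)
| denotes_no : denotes (MV VNo) (fun _ => False)
| denotes_end P : denotes (MV VEnd) P
| denotes_and m1 m2 P1 P2 :
    denotes m1 P1 -> denotes m2 P2 -> denotes (MAnd m1 m2) (fun g => P1 g /\ P2 g)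
| denotes_or m1 m2 P1 P2 :
    denotes m1 P1 -> denotes m2 P2 -> denotes (MOr m1 m2) (fun g => P1 g \/ P2 g)
| denotes_ext m P Q : denotes m P -> (forall g, P g <-> Q g) -> denotes m Q
| denotes_synth p r s : closed_env r -> (forall X, denotes (r X) (s X)) ->
    denotes (msubst (synth p) r) (sem p s).

Definition coherent m (P : trace Act -> Prop) :=
  [/\ forall m', step m None m' -> denotes m' P,
      forall a m', step m (Some a) m' -> denotes m' (fun g => P (tcons a g)),
      m = MV VYes -> forall g, P g &
      m = MV VNo -> forall g, ~ P g].

Lemma coherent_ext m P Q : coherent m P -> (forall g, P g <-> Q g) -> coherent m Q.
Proof.
move=> [tau act yes no] PQ; split.
- by move=> m' /tau mP; apply: denotes_ext mP PQ.
- by move=> a m' /act mP; apply: denotes_ext mP _ => g; apply: PQ.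
- by move=> /yes Pg g; apply/PQ.
- by move=> /no nPg g /PQ /nPg.
Qed.

Lemma coherent_yes : coherent (MV VYes) (fun _ => True).
Proof.
split=> // [m' st|a m' st]; inversion st; exact: denotes_yes.
Qed.

Lemma coherent_no : coherent (MV VNo) (fun _ => False).
Proof.
split=> // [m' st|a m' st|_ g //]; inversion st; exact: denotes_no.
Qed.

Lemma coherent_end P : coherent (MV VEnd) P.
Proof.
split=> // [m' st|a m' st]; inversion st; exact: denotes_end.
Qed.

Lemma coherent_and m1 m2 P1 P2 :
  denotes m1 P1 -> coherent m1 P1 -> denotes m2 P2 -> coherent m2 P2 ->
  coherent (MAnd m1 m2) (fun g => P1 g /\ P2 g).
Proof.
move=> d1 [tau1 act1 yes1 no1] d2 [tau2 act2 yes2 no2]; split=> //.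
- move=> m' st; inversion st; subst.
  + by apply: denotes_and => //; apply: tau1.
  + by apply: denotes_and => //; apply: tau2.
  + exact: denotes_end.
  + by apply: denotes_ext d2 _ => g; split=> [|[]//]; split=> //; apply: yes1.
  + by apply: denotes_ext d1 _ => g; split=> [|[]//]; split=> //; apply: yes2.
  + by apply: denotes_ext denotes_no _ => g; split=> // [[/(no1 erefl g)]].
  + by apply: denotes_ext denotes_no _ => g; split=> // [[_ /(no2 erefl g)]].
- by move=> a m' st; inversion st; subst; apply: denotes_and; [apply: act1|apply: act2].
Qed.

Lemma coherent_or m1 m2 P1 P2 :
  denotes m1 P1 -> coherent m1 P1 -> denotes m2 P2 -> coherent m2 P2 ->
  coherent (MOr m1 m2) (fun g => P1 g \/ P2 g).
Proof.
move=> d1 [tau1 act1 yes1 no1] d2 [tau2 act2 yes2 no2]; split=> //.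
- move=> m' st; inversion st; subst.
  + by apply: denotes_or => //; apply: tau1.
  + by apply: denotes_or => //; apply: tau2.
  + exact: denotes_end.
  + by apply: denotes_ext d2 _ => g; split=> [|[/(no1 erefl g)|]//]; right.
  + by apply: denotes_ext d1 _ => g; split=> [|[|/(no2 erefl g)]//]; left.
  + by apply: denotes_ext denotes_yes _ => g; split=> // _; left; apply: yes1.
  + by apply: denotes_ext denotes_yes _ => g; split=> // _; right; apply: yes2.
- by move=> a m' st; inversion st; subst; apply: denotes_or; [apply: act1|apply: act2].
Qed.

Lemma coherent_guard_mon A n v P V Q : denotes n P -> denotes (MV v) V ->
  (forall a g, a \in A -> P g <-> Q (tcons a g)) ->
  (forall a g, a \notin A -> V g <-> Q (tcons a g)) ->
  coherent (guard_mon A n v) Q.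
Proof.
move=> dn dv inA notinA; split.
- by move=> m' /guard_mon_stepP [].
- move=> a m' /guard_mon_stepP [b [<-] ->]; case: ifP => aA.
  + by apply: denotes_ext dn _ => g; apply: inA.
  + by apply: denotes_ext dv _ => g; apply: notinA; rewrite aA.
- by move/guard_mon_verdict.
- by move/guard_mon_verdict.
Qed.

Lemma coherent_rec x m r P : closed_env r ->
  denotes (msubst m (mupd r x (msubst (MRec x m) r))) P -> coherent (msubst (MRec x m) r) P.
Proof.
move=> clr dP; split=> // [m' st|a m' st]; inversion st; subst.
by rewrite subst_msubst // => y _; apply: subst_mclosed (clr y) _.
Qed.

Lemma coherent_synth_rec Y p r s Q : closed_env r -> (forall X, denotes (r X) (s X)) ->
  denotes (msubst (synth (FMax Y p)) r) Q -> (forall g, sem p (upd s Y Q) g <-> Q g) ->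
  coherent (msubst (synth (FMax Y p)) r) Q.
Proof.
move=> clr drs dQ unfoldQ; apply: coherent_rec => //.
apply: denotes_ext unfoldQ; apply: denotes_synth => [|X].
  by apply: closed_env_mupd => //; apply: mclosed_msubst.
by rewrite /mupd /upd; case: eqP.
Qed.

Lemma coherent_synth p r s : closed_env r -> (forall X, denotes (r X) (s X)) ->
  (forall X, coherent (r X) (s X)) -> coherent (msubst (synth p) r) (sem p s).
Proof.
elim: p r s => [|| p IHp q IHq | p IHp q IHq | A p IHp | A p IHp | Y p IHp | Y p IHp | Y]
  r s clr drs crs.
- exact: coherent_yes.
- exact: coherent_no.
- by apply: coherent_or; [apply: denotes_synth|apply: IHp|apply: denotes_synth|apply: IHq].
- by apply: coherent_and; [apply: denotes_synth|apply: IHp|apply: denotes_synth|apply: IHq].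
- rewrite -[synth _]/(guard_mon A (synth p) VNo) msubst_guard_mon.
  apply: coherent_guard_mon (denotes_synth p clr drs) denotes_no _ _.
  + move=> a g aA /=; split=> [pg|[b [g' [_ [/tcons_inj [_ ->] //]]]]].
    by exists a, g.
  + move=> a g aA /=; split=> // [[b [g' [bA [/tcons_inj [ab _] _]]]]].
    by rewrite ab bA in aA.
- rewrite -[synth _]/(guard_mon A (synth p) VYes) msubst_guard_mon.
  apply: coherent_guard_mon (denotes_synth p clr drs) denotes_yes _ _.
  + move=> a g aA /=; split=> [pg b g' _ /tcons_inj [_ <-] //|box].
    exact: box a g aA erefl.
  + move=> a g aA /=; split=> // _ b g' bA /tcons_inj [ab _].
    by rewrite ab bA in aA.
- apply: coherent_synth_rec (denotes_synth (FMin Y p) clr drs) _ => //.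
  exact: sem_min_unfold.
- apply: coherent_synth_rec (denotes_synth (FMax Y p) clr drs) _ => //.
  exact: sem_max_unfold.
- exact: crs.
Qed.

Lemma denotes_coherent m P : denotes m P -> coherent m P.
Proof.
elim=> {m P} [||P|m1 m2 P1 P2 d1 c1 d2 c2|m1 m2 P1 P2 d1 c1 d2 c2|m P Q _ c PQ|p r s clr drs crs].
- exact: coherent_yes.
- exact: coherent_no.
- exact: coherent_end.
- exact: coherent_and.
- exact: coherent_or.
- exact: coherent_ext c PQ.
- exact: coherent_synth.
Qed.

Definition tcat (s : seq Act) (g : trace Act) : trace Act := foldr (@tcons Act) g s.

Lemma tcat_fin s t : tcat s (TFin t) = TFin (s ++ t).
Proof. by elim: s => [|a s IH] //=; rewrite IH. Qed.

Lemma mkseq_cons T (f : nat -> T) k : mkseq f k.+1 = f 0 :: mkseq (fun i => f i.+1) k.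
Proof. by rewrite /mkseq /= -[1]/(1 + 0) iotaDl -map_comp. Qed.

Lemma is_prefix_nil (g : trace Act) : is_prefix [::] g.
Proof. by case: g => [t|f] //=; rewrite take0. Qed.

Lemma is_prefix_cons a s (g : trace Act) : is_prefix s g -> is_prefix (a :: s) (tcons a g).
Proof. by case: g => [t|f] /= E; rewrite ?mkseq_cons /= -E. Qed.

Lemma is_prefixP s (g : trace Act) : is_prefix s g -> exists h, g = tcat s h.
Proof.
case: g => [t|f] /= E.
  by exists (TFin (drop (size s) t)); rewrite tcat_fin {1}E cat_take_drop.
exists (TInf (fun k => f (k + size s))).
elim: s f E => [|a s IH] f /= E.
  by congr TInf; apply: functional_extensionality => k; rewrite addn0.
have shift : (fun k => f (k + (size s).+1)) = (fun k => f (k + size s).+1).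
  by apply: functional_extensionality => k; rewrite addnS.
move: E; rewrite mkseq_cons shift => -[-> /IH] /= <-.
by congr TInf; apply: functional_extensionality => -[|k].
Qed.

Lemma tcat_prefix_le s1 s2 h1 h2 : tcat s1 h1 = tcat s2 h2 -> size s1 <= size s2 ->
  exists t, s2 = s1 ++ t.
Proof.
elim: s1 s2 => [|a s1 IH] [|b s2] //=; first by exists [::].
  by exists (b :: s2).
by move=> /tcons_inj [<- /IH] /[apply] [[t ->]]; exists t.
Qed.

Lemma taus_wtrace m m1 m2 s : taus m m1 -> wtrace m1 s m2 -> wtrace m s m2.
Proof.
case: s => [|a s] /= mm1; first exact: rt_trans.
case=> [x [[y1 [y2 [m1y1 st]]] xs]]; exists x; split=> //.
by exists y1, y2; split=> //; apply: rt_trans m1y1.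
Qed.

Lemma wtrace_cat m m1 m2 s t : wtrace m s m1 -> wtrace m1 t m2 -> wtrace m (s ++ t) m2.
Proof.
elim: s m => [|a s IH] m /=; first exact: taus_wtrace.
by case=> x [mx xs] m1t; exists x; split=> //; apply: IH xs m1t.
Qed.

Lemma wtrace_verdict v s : wtrace (MV v : mon Act) s (MV v).
Proof.
elim: s => [|a s IH] /=; first exact: rt_refl.
by exists (MV v); split=> //; exists (MV v), (MV v);
  split; [|split]; [apply: rt_refl|apply: st_verd|apply: rt_refl].
Qed.

Lemma wtrace_verdict_cat m v s t : wtrace m s (MV v) -> wtrace m (s ++ t) (MV v).
Proof. by move/wtrace_cat; apply; apply: wtrace_verdict. Qed.

Lemma wtrace_tau m s m1 m2 : wtrace m s m1 -> step m1 None m2 -> wtrace m s m2.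
Proof. by move=> ms st; rewrite -(cats0 s); apply: (wtrace_cat ms); apply: rt_step. Qed.

Section ParallelComposition.
Variable op : mon Act -> mon Act -> mon Act.
Hypothesis step_op_taul : forall m m' n, step m None m' -> step (op m n) None (op m' n).
Hypothesis step_op_taur : forall m n n', step n None n' -> step (op m n) None (op m n').
Hypothesis step_op_act : forall m m' n n' a,
  step m (Some a) m' -> step n (Some a) n' -> step (op m n) (Some a) (op m' n').

Lemma taus_op m m' n n' : taus m m' -> taus n n' -> taus (op m n) (op m' n').
Proof.
move=> mm' nn'; apply: (@rt_trans _ _ _ (op m' n)).
  elim: mm' => {m m'} [m m' st|m|m1 m2 m3 _ IH1 _ IH2]; last exact: rt_trans IH1 IH2.
  - exact/rt_step/step_op_taul.
  - exact: rt_refl.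
elim: nn' => {n n'} [n n' st|n|n1 n2 n3 _ IH1 _ IH2]; last exact: rt_trans IH1 IH2.
- exact/rt_step/step_op_taur.
- exact: rt_refl.
Qed.

Lemma wtrace_op s m1 m1' m2 m2' : wtrace m1 s m1' -> wtrace m2 s m2' ->
  wtrace (op m1 m2) s (op m1' m2').
Proof.
elim: s m1 m2 => [|a s IH] m1 m2 /=; first exact: taus_op.
case=> [x1 [[y1 [z1 [T1 [S1 U1]]]] W1]] [x2 [[y2 [z2 [T2 [S2 U2]]]] W2]].
exists (op x1 x2); split; last exact: IH.
by exists (op y1 y2), (op z1 z2);
  split; [|split]; [apply: taus_op|apply: step_op_act|apply: taus_op].
Qed.

End ParallelComposition.

Lemma wtrace_and s m1 m1' m2 m2' : wtrace m1 s m1' -> wtrace m2 s m2' ->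
  wtrace (MAnd m1 m2) s (MAnd m1' m2').
Proof. by apply: wtrace_op => *; [apply: st_and_taul|apply: st_and_taur|apply: st_and_act]. Qed.

Lemma wtrace_or s m1 m1' m2 m2' : wtrace m1 s m1' -> wtrace m2 s m2' ->
  wtrace (MOr m1 m2) s (MOr m1' m2').
Proof. by apply: wtrace_op => *; [apply: st_or_taul|apply: st_or_taur|apply: st_or_act]. Qed.

Lemma denotes_taus m m' P : denotes m P -> taus m m' -> denotes m' P.
Proof.
move=> dP mm'; elim: mm' P dP => {m m'} [m m' st|//|m1 m2 m3 _ IH1 _ IH2] P dP.
- by case: (denotes_coherent dP) => /(_ _ st).
- exact/IH2/IH1.
Qed.

Lemma denotes_wtrace m P s m' : denotes m P -> wtrace m s m' -> denotes m' (fun g => P (tcat s g)).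
Proof.
elim: s m P => [|a s IH] m P /= dP; first exact: denotes_taus.
case=> [x [[y1 [y2 [my1 [st y2x]]]] xs]]; apply: (IH x (fun g => P (tcons a g))) => //.
apply: denotes_taus y2x; case: (denotes_coherent (denotes_taus dP my1)) => _ act _ _.
exact: act st.
Qed.

Lemma denotes_synth_closed phi : closedF phi -> denotes (synth phi) (semF phi).
Proof.
move=> clphi; rewrite -(@msubst_synth_closed [::] phi (fun _ => MV VNo)) //.
by apply: denotes_synth => // X; apply: denotes_no.
Qed.

Lemma synth_sound phi : closedF phi -> sound (synth phi) phi.
Proof.
move=> /denotes_synth_closed dphi g; split=> -[s [sg ms]]; have [h ->] := is_prefixP sg.
- by case: (denotes_coherent (denotes_wtrace dphi ms)) => _ _ _ no; apply: no.
- by case: (denotes_coherent (denotes_wtrace dphi ms)) => _ _ yes _; apply: yes.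
Qed.

Definition total_upto k m := forall s : seq Act, size s <= k -> exists m', wtrace m s m'.

Definition total m := forall s : seq Act, exists m', wtrace m s m'.

Lemma total_upto_le k l m : l <= k -> total_upto k m -> total_upto l m.
Proof. by move=> lk km s sl; apply: km; apply: leq_trans sl lk. Qed.

Lemma total_upto_tau k m m' : step m None m' -> total_upto k m' -> total_upto k m.
Proof.
move=> st km' s sk; have [x m'x] := km' s sk; exists x.
by apply: taus_wtrace m'x; apply: rt_step.
Qed.

Lemma total_verdict v : total (MV v).
Proof. by move=> s; exists (MV v); apply: wtrace_verdict. Qed.

Lemma total_upto_and k m1 m2 : total_upto k m1 -> total_upto k m2 -> total_upto k (MAnd m1 m2).
Proof.
move=> t1 t2 s sk; have [[x1 w1] [x2 w2]] := (t1 s sk, t2 s sk).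
by exists (MAnd x1 x2); apply: wtrace_and.
Qed.

Lemma total_upto_or k m1 m2 : total_upto k m1 -> total_upto k m2 -> total_upto k (MOr m1 m2).
Proof.
move=> t1 t2 s sk; have [[x1 w1] [x2 w2]] := (t1 s sk, t2 s sk).
by exists (MOr x1 x2); apply: wtrace_or.
Qed.

Lemma total_upto_guard_mon k A n v : total_upto k n -> total_upto k.+1 (guard_mon A n v).
Proof.
move=> kn [|a s] sk; first by exists (guard_mon A n v); apply: rt_refl.
have [x nx] : exists x, wtrace (if a \in A then n else MV v) s x.
  by case: ifP => _; [apply: kn|apply: total_verdict].
exists x, (if a \in A then n else MV v); split=> //.
by exists (guard_mon A n v), (if a \in A then n else MV v); split; [|split];
  [apply: rt_refl|apply: guard_mon_step|apply: rt_refl].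
Qed.

(* The variables of [U] occur only under a modality of [p], hence are reached only after
   one action and need to follow one step less. *)
Definition synth_total_upto k p := forall U r, guarded_in U p -> closed_env r ->
  (forall X, X \in U -> total_upto k.-1 (r X)) -> (forall X, X \notin U -> total_upto k (r X)) ->
  total_upto k (msubst (synth p) r).

Lemma synth_total_upto_rec k Y p :
  synth_total_upto k (FMax Y p) -> synth_total_upto k.+1 p -> synth_total_upto k.+1 (FMax Y p).
Proof.
move=> IHk IHp U r /= gp clr inU notinU.
set R := msubst (MRec Y (synth p)) r.
have kR : total_upto k R.
  apply: (IHk U) => // X; first by move/inU/(total_upto_le (leq_pred k)).
  by move/notinU/(total_upto_le (leqnSn k)).
apply: total_upto_tau (step_rec_msubst Y (synth p) clr) _.
apply: (IHp (Y :: U)) => //.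
- exact/closed_env_mupd/mclosed_msubst.
- by move=> X; rewrite inE /mupd; case: eqP => // _ /inU.
- by move=> X; rewrite inE /mupd; case: eqP => // _ /notinU.
Qed.

Lemma synth_total_upto_all k p : synth_total_upto k p.
Proof.
elim: k p => [|k IHk] p.
  by move=> U r _ _ _ _ [|a s] // _; exists (msubst (synth p) r); apply: rt_refl.
have guarded_body q (U : seq nat) r : guarded_in [::] q -> closed_env r ->
    (forall X, X \in U -> total_upto k (r X)) -> (forall X, X \notin U -> total_upto k.+1 (r X)) ->
    total_upto k (msubst (synth q) r).
  move=> gq clr inU notinU; apply: (IHk q [::]) => // X _.
  by case: (boolP (X \in U)) => [/inU|/notinU /(total_upto_le (leqnSn k))].
elim: p => [|| p IHp q IHq | p IHp q IHq | A p IHp | A p IHp | Y p IHp | Y p IHp | Y].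
- by move=> U r _ _ _ _ s _; apply: total_verdict.
- by move=> U r _ _ _ _ s _; apply: total_verdict.
- move=> U r /andP [gp gq] clr inU notinU.
  by apply: total_upto_or; [apply: (IHp U)|apply: (IHq U)].
- move=> U r /andP [gp gq] clr inU notinU.
  by apply: total_upto_and; [apply: (IHp U)|apply: (IHq U)].
- move=> U r gp clr inU notinU.
  rewrite -[synth _]/(guard_mon A (synth p) VNo) msubst_guard_mon.
  by apply/total_upto_guard_mon/(guarded_body _ U).
- move=> U r gp clr inU notinU.
  rewrite -[synth _]/(guard_mon A (synth p) VYes) msubst_guard_mon.
  by apply/total_upto_guard_mon/(guarded_body _ U).
- exact: synth_total_upto_rec (IHk _) IHp.
- exact: synth_total_upto_rec (IHk _) IHp.
- by move=> U r gY _ _ notinU; apply: notinU.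
Qed.

Lemma total_synth U p r : guarded_in U p -> closed_env r -> (forall X, total (r X)) ->
  total (msubst (synth p) r).
Proof.
move=> gp clr tr s.
by apply: (synth_total_upto_all gp clr) (leqnn _) => X _ t _; apply: tr.
Qed.

Definition reaches m v (g : trace Act) := exists s, is_prefix s g /\ wtrace m s (MV v).

Lemma reaches_verdict v g : reaches (MV v) v g.
Proof. by exists [::]; split; [apply: is_prefix_nil|apply: rt_refl]. Qed.

Lemma reaches_tau m m' v g : step m None m' -> reaches m' v g -> reaches m v g.
Proof.
by move=> st [s [sg m's]]; exists s; split=> //; apply: taus_wtrace m's; apply: rt_step.
Qed.

Lemma reaches_act m m' a v g : step m (Some a) m' -> reaches m' v g -> reaches m v (tcons a g).
Proof.
move=> st [s [sg m's]]; exists (a :: s); split; first exact: is_prefix_cons.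
by exists m'; split=> //; exists m, m'; split; [|split]; [apply: rt_refl|exact: st|apply: rt_refl].
Qed.

Section ReachesComposition.
Variable op : mon Act -> mon Act -> mon Act.
Hypothesis wtrace_op : forall s m1 m1' m2 m2', wtrace m1 s m1' -> wtrace m2 s m2' ->
  wtrace (op m1 m2) s (op m1' m2').

(* The verdict reached along the shorter prefix persists while the other side catches up. *)
Lemma reaches_op v m1 m2 g : step (op (MV v) (MV v)) None (MV v) ->
  reaches m1 v g -> reaches m2 v g -> reaches (op m1 m2) v g.
Proof.
move=> st [s1 [s1g w1]] [s2 [s2g w2]].
have [[h1 E1] [h2 E2]] := (is_prefixP s1g, is_prefixP s2g).
case: (leqP (size s1) (size s2)) => [le12|/ltnW le21].
- have [t E] := tcat_prefix_le (etrans (esym E1) E2) le12.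
  exists s2; split=> //; apply: wtrace_tau st; apply: wtrace_op => //.
  by rewrite E; apply: wtrace_verdict_cat.
- have [t E] := tcat_prefix_le (etrans (esym E2) E1) le21.
  exists s1; split=> //; apply: wtrace_tau st; apply: wtrace_op => //.
  by rewrite E; apply: wtrace_verdict_cat.
Qed.

Lemma reaches_opl v m1 m2 g : (forall n, step (op (MV v) n) None (MV v)) ->
  total m2 -> reaches m1 v g -> reaches (op m1 m2) v g.
Proof.
move=> st t2 [s [sg w1]]; have [x w2] := t2 s.
by exists s; split=> //; apply: wtrace_tau (st x); apply: wtrace_op.
Qed.

Lemma reaches_opr v m1 m2 g : (forall n, step (op n (MV v)) None (MV v)) ->
  total m1 -> reaches m2 v g -> reaches (op m1 m2) v g.
Proof.
move=> st t1 [s [sg w2]]; have [x w1] := t1 s.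
by exists s; split=> //; apply: wtrace_tau (st x); apply: wtrace_op.
Qed.

End ReachesComposition.

Lemma sHML_unrejected_sem p U r s : sHML p -> guarded_in U p -> closed_env r ->
  (forall X, total (r X)) -> (forall X g, ~ reaches (r X) VNo g -> s X g) ->
  forall g, ~ reaches (msubst (synth p) r) VNo g -> sem p s g.
Proof.
elim: p U r s => [|| p IHp q IHq | p IHp q IHq | A p IHp | A p IHp | Y p IHp | Y p IHp | Y]
  U r s //= shp gp clr tr rs g nrej.
- by apply: nrej; apply: reaches_verdict.
- case/andP: shp => shp shq; case/andP: gp => gp gq.
  have [rp|] := classic (reaches (msubst (synth p) r) VNo g); last by left; apply: (IHp U r).
  have [rq|] := classic (reaches (msubst (synth q) r) VNo g); last by right; apply: (IHq U r).
  by case: nrej; apply: (reaches_op wtrace_or) => //; apply: st_or_nol.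
- case/andP: shp => shp shq; case/andP: gp => gp gq; split.
  + apply: (IHp U r) => // rp; apply/nrej/(reaches_opl wtrace_and) => //.
      by move=> n; apply: st_and_nol.
    exact: total_synth gq clr tr.
  + apply: (IHq U r) => // rq; apply/nrej/(reaches_opr wtrace_and) => //.
      by move=> n; apply: st_and_nor.
    exact: total_synth gp clr tr.
- move=> a g' aA E; subst g; apply: (IHp [::] r) => // rp; apply: nrej.
  rewrite -[osum _ _]/(guard_mon A (synth p) VYes) msubst_guard_mon.
  by apply: reaches_act (guard_mon_step _ _ _ a) _; rewrite aA.
- set R := msubst (synth (FMax Y p)) r.
  exists (fun h => ~ reaches R VNo h); split=> // h nrejh.
  apply: (IHp (Y :: U) (mupd r Y R)) => //.
  + exact/closed_env_mupd/mclosed_msubst.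
  + by move=> X; rewrite /mupd; case: eqP => _ //; apply: (@total_synth U (FMax Y p)) gp clr tr.
  + by move=> X k; rewrite /mupd /upd; case: eqP => _ //; apply: rs.
  + by move=> rh; apply/nrejh/(reaches_tau (step_rec_msubst Y (synth p) clr)).
- exact: rs.
Qed.

Lemma cHML_sem_accepted p U r s : cHML p -> guarded_in U p -> closed_env r ->
  (forall X, total (r X)) -> (forall X g, s X g -> reaches (r X) VYes g) ->
  forall g, sem p s g -> reaches (msubst (synth p) r) VYes g.
Proof.
elim: p U r s => [|| p IHp q IHq | p IHp q IHq | A p IHp | A p IHp | Y p IHp | Y p IHp | Y]
  U r s //= chp gp clr tr sr g.
- by move=> _; apply: reaches_verdict.
- case/andP: chp => chp chq; case/andP: gp => gp gq; case=> [pg|qg].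
  + apply: (reaches_opl wtrace_or); first by move=> n; apply: st_or_yesl.
      exact: total_synth gq clr tr.
    exact: (IHp U r s).
  + apply: (reaches_opr wtrace_or); first by move=> n; apply: st_or_yesr.
      exact: total_synth gp clr tr.
    exact: (IHq U r s).
- case/andP: chp => chp chq; case/andP: gp => gp gq; case=> pg qg.
  apply: (reaches_op wtrace_and); first exact: st_and_yesl.
  + exact: (IHp U r s).
  + exact: (IHq U r s).
- case=> a [g' [aA [-> pg']]].
  rewrite -[osum _ _]/(guard_mon A (synth p) VNo) msubst_guard_mon.
  apply: reaches_act (guard_mon_step _ _ _ a) _; rewrite aA.
  exact: (IHp [::] r s).
- set R := msubst (synth (FMin Y p)) r.
  move=> lfp; apply: (lfp (reaches R VYes)) => h ph.
  apply: reaches_tau (step_rec_msubst Y (synth p) clr) _.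
  apply: (IHp (Y :: U) (mupd r Y R) _ chp gp) ph.
  + exact/closed_env_mupd/mclosed_msubst.
  + by move=> X; rewrite /mupd; case: eqP => _ //; apply: (@total_synth U (FMin Y p)) gp clr tr.
  + by move=> X k; rewrite /mupd /upd; case: eqP => _ //; apply: sr.
- exact: sr.
Qed.

End MonitorSynthesis.

Theorem mainTheorem10 (Act : finType) (phi : form Act) :
  closedF phi -> guardedF phi ->
  (sHML phi -> sound (synth phi) phi /\ violation_complete (synth phi) phi) /\
  (cHML phi -> sound (synth phi) phi /\ satisfaction_complete (synth phi) phi).
Proof.
move=> clphi gphi.
pose r0 (X : nat) : mon Act := MV VNo.
have synth_phi : msubst (synth phi) r0 = synth phi by apply: (msubst_synth_closed clphi).
have clr0 : closed_env r0 by [].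
have total_r0 X : total (r0 X) by apply: total_verdict.
split=> frag; split; try exact: synth_sound.
- move=> g nphi; apply: NNPP => nrej; apply: nphi.
  apply: (sHML_unrejected_sem frag gphi clr0 total_r0); last by rewrite synth_phi.
  by move=> X h; case; apply: reaches_verdict.
- move=> g phig; rewrite -synth_phi.
  by apply: (cHML_sem_accepted frag gphi clr0 total_r0) phig => X h [].
Qed.
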